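(* Let $S_2^{in}>S_2^m$, $S_1^{in}>\lambda_1^1(D,r)$, and $0<D\le\min\bigl(rm_1,(1-r)\mu_2(S_2^m)\bigr)$ (so that $\phi_j(D)$ is defined). Then $\phi_1(D)>0$. In addition, if $D>D_2^*:=(1-r)\mu_2(S_2^{in})$, then $\phi_2(D)>0$.
   Context: Let $k_1,k_2>0$, $r\in(0,1)$, $r_1=r$, $r_2=1-r$, $D_i=D/r_i$. $\mu_1\in C^1(\mathbb R_+)$ with $\mu_1(0)=0$, $\mu_1(+\infty)=m_1$, $\mu_1'>0$ on $(0,\infty)$; $\mu_2\in C^1(\mathbb R_+)$ with $\mu_2(0)=0$, $\mu_2(+\infty)=0$, and there is $S_2^m>0$ with $\mu_2'>0$ on $(0,S_2^m)$, $\mu_2'<0$ on $(S_2^m,\infty)$. $\lambda_1^1(D,r)$ is the unique solution of $\mu_1(S)=D_1$; $\lambda_2^{21}(D,r)\le\lambda_2^{22}(D,r)$ are the solutions of $\mu_2(S)=D_2$ (for $D\le r_2\mu_2(S_2^m)$). Let $X_1^{1*}=(S_1^{in}-\lambda_1^1)/k_1$ and let $X_1^{2*}=X_1^{2*}(D,r,S_1^{in})$ be the unique solution in $(X_1^{1*},S_1^{in}/k_1)$ of $\mu_1(S_1^{in}-k_1x)=D_2(x-X_1^{1*})/x$. Define $\phi_j(D)=S_2^{in}+k_2X_1^{2*}-\lambda_2^{2j}(D,r)$, $j=1,2$. *)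

From Stdlib Require Import Reals Lra.
From Coquelicot Require Import Coquelicot.
Open Scope R_scope.

Definition C1_Rplus (f : R -> R) : Prop :=
  (forall x, 0 <= x -> filterlim f (at_right x) (locally (f x))) /\
  (forall x, 0 < x -> ex_derive f x /\ continuous (Derive f) x) /\
  (exists d0, filterlim (Derive f) (at_right 0) (locally d0)).

Definition mu1_hyp (mu1 : R -> R) (m1 : R) : Prop :=
  C1_Rplus mu1 /\ mu1 0 = 0 /\ is_lim mu1 p_infty m1 /\
  (forall x, 0 < x -> Derive mu1 x > 0).

Definition mu2_hyp (mu2 : R -> R) (S2m : R) : Prop :=
  0 < S2m /\ C1_Rplus mu2 /\ mu2 0 = 0 /\ is_lim mu2 p_infty 0 /\
  (forall x, 0 < x < S2m -> Derive mu2 x > 0) /\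
  (forall x, S2m < x -> Derive mu2 x < 0).

(* Break-even concentrations, D_i = D / r_i with r_1 = r, r_2 = 1 - r. *)
Definition is_lambda11 (mu1 : R -> R) (D r lam : R) : Prop :=
  0 <= lam /\ mu1 lam = D / r.

Definition is_lambda2 (mu2 : R -> R) (D r lam21 lam22 : R) : Prop :=
  0 <= lam21 <= lam22 /\
  (forall S, 0 <= S -> (mu2 S = D / (1 - r) <-> (S = lam21 \/ S = lam22))).

Definition X11 (k1 S1in lam : R) : R := (S1in - lam) / k1.

Definition is_X12 (mu1 : R -> R) (k1 D r S1in lam x : R) : Prop :=
  X11 k1 S1in lam < x < S1in / k1 /\
  mu1 (S1in - k1 * x) = (D / (1 - r)) * (x - X11 k1 S1in lam) / x.

Definition phi (S2in k2 x lam2j : R) : R := S2in + k2 * x - lam2j.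

(** [lambda_2^{21}] lies on the increasing branch of [mu2]: the intermediate
    value theorem on [[0, S2m]] yields a solution of [mu2 S = D_2] there, and
    [lambda_2^{21}] is the smaller of the two solutions.  Hence
    [lambda_2^{21} <= S2m < S2in], and [phi_1(D) > 0] because [X_1^{2*} > 0].
    If moreover [mu2 S2in < D_2], then [lambda_2^{22} < S2in], since [mu2] is
    strictly decreasing beyond [S2m]; so [phi_2(D) > 0] as well. *)

From Stdlib Require Import Reals Lra.
From Coquelicot Require Import Coquelicot.
Open Scope R_scope.

Lemma IVT_right_continuous (f : R -> R) (a b c : R) :
  a < b -> filterlim f (at_right a) (locally (f a)) ->
  (forall x, a < x <= b -> continuous f x) ->
  f a < c <= f b -> exists z, a < z <= b /\ f z = c.
Proof.
  intros Hab Hright Hcont [Hfa Hfb].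
  destruct (Req_dec c (f b)) as [Hcb | Hcb].
  { exists b; split; [lra | auto]. }
  assert (Hnear : at_right a (fun x => f x < c)).
  { exact (Hright (fun y => y < c) (open_lt c (f a) Hfa)). }
  destruct Hnear as [delta Hdelta].
  set (h := Rmin delta (b - a)).
  assert (Hh : 0 < h <= delta /\ h <= b - a).
  { pose proof (cond_pos delta).
    unfold h; repeat split; [apply Rmin_glb_lt; lra | apply Rmin_l | apply Rmin_r]. }
  set (e := a + h / 2).
  assert (He : a < e < b) by (unfold e; lra).
  assert (Hfe : f e < c).
  { apply Hdelta; [| lra].
    change (Rabs (e - a) < delta).
    rewrite Rabs_pos_eq; unfold e; lra. }
  destruct (Ranalysis5.IVT_interv (fun x => f x - c) e b) as [z [Hz Hfz]];
    [| lra | lra | lra |].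
  - intros x Hx. apply continuity_pt_filterlim.
    apply (continuous_minus f (fun _ => c)); [apply Hcont; lra |].
    apply continuous_const.
  - exists z; split; lra.
Qed.

Section Mu2.

Variables (mu2 : R -> R) (S2m : R).
Hypothesis Hmu2 : mu2_hyp mu2 S2m.

Lemma mu2_continuous (x : R) : 0 < x -> continuous mu2 x.
Proof.
  intros Hx. destruct Hmu2 as [_ [[_ [Hderiv _]] _]].
  apply (ex_derive_continuous (V := R_NormedModule)), Hderiv, Hx.
Qed.

Lemma mu2_strictly_decreasing (x y : R) : S2m < x < y -> mu2 y < mu2 x.
Proof.
  intros Hxy. destruct Hmu2 as [HS2m [[_ [Hderiv _]] [_ [_ [_ Hneg]]]]].
  apply Ropp_lt_cancel.
  apply (incr_function (fun t => - mu2 t) S2m p_infty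
           (fun t => - Derive mu2 t)); simpl; try lra.
  - intros t Ht _.
    exact (is_derive_opp mu2 t _ (Derive_correct _ _ (proj1 (Hderiv t ltac:(lra))))).
  - intros t Ht _. pose proof (Hneg t Ht). lra.
Qed.

Lemma mu2_attains_increasing (c : R) :
  0 < c <= mu2 S2m -> exists S, 0 < S <= S2m /\ mu2 S = c.
Proof.
  intros Hc. destruct Hmu2 as [HS2m [[Hright _] [H0 _]]].
  apply IVT_right_continuous; [lra | apply Hright; lra | | lra].
  intros x Hx. apply mu2_continuous; lra.
Qed.

Variables (D r lam21 lam22 : R).
Hypothesis Hlam2 : is_lambda2 mu2 D r lam21 lam22.

Lemma lambda21_le_argmax : 0 < D / (1 - r) <= mu2 S2m -> lam21 <= S2m.
Proof.
  intros Hc. destruct Hlam2 as [Hord Hsol].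
  destruct (mu2_attains_increasing _ Hc) as [S [HS HmuS]].
  destruct (proj1 (Hsol S ltac:(lra)) HmuS); lra.
Qed.

Lemma lambda22_lt (S : R) : S2m < S -> mu2 S < D / (1 - r) -> lam22 < S.
Proof.
  intros HS HmuS. destruct Hlam2 as [Hord Hsol].
  destruct (Rlt_le_dec lam22 S) as [Hlt | Hge]; [exact Hlt | exfalso].
  assert (Hmu22 : mu2 lam22 = D / (1 - r)).
  { destruct Hmu2 as [HS2m _]. apply (Hsol lam22); lra. }
  destruct (Req_dec lam22 S) as [-> | Hne]; [lra |].
  pose proof (mu2_strictly_decreasing S lam22 ltac:(lra)). lra.
Qed.

End Mu2.

Lemma X12_pos (mu1 : R -> R) (k1 D r S1in lam x : R) :
  0 < k1 -> lam < S1in -> is_X12 mu1 k1 D r S1in lam x -> 0 < x.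
Proof.
  intros Hk1 Hlam [[HX _] _].
  assert (0 < X11 k1 S1in lam) by (apply Rdiv_lt_0_compat; lra). lra.
Qed.

Theorem lemmaA4
  (k1 k2 r m1 S2m : R) (mu1 mu2 : R -> R)
  (D S1in S2in lam1 lam21 lam22 x2 : R) :
  0 < k1 -> 0 < k2 -> 0 < r < 1 ->
  mu1_hyp mu1 m1 -> mu2_hyp mu2 S2m ->
  0 < D -> D <= Rmin (r * m1) ((1 - r) * mu2 S2m) ->
  is_lambda11 mu1 D r lam1 ->
  is_lambda2 mu2 D r lam21 lam22 ->
  S2in > S2m -> S1in > lam1 ->
  is_X12 mu1 k1 D r S1in lam1 x2 ->
  phi S2in k2 x2 lam21 > 0 /\
  (D > (1 - r) * mu2 S2in -> phi S2in k2 x2 lam22 > 0).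
Proof.
  intros Hk1 Hk2 Hr _ Hmu2 HD HDle _ Hlam2 HS2in HS1in HX12.
  assert (Hk2x2 : 0 < k2 * x2).
  { apply Rmult_lt_0_compat; [lra | exact (X12_pos _ _ _ _ _ _ _ Hk1 HS1in HX12)]. }
  assert (Hr' : 1 - r > 0) by lra.
  unfold phi; split.
  - assert (Hlam21 : lam21 <= S2m).
    { apply (lambda21_le_argmax mu2 S2m Hmu2 D r lam21 lam22 Hlam2); split.
      - apply Rdiv_lt_0_compat; lra.
      - apply Rle_div_l; [exact Hr' |].
        pose proof (Rmin_r (r * m1) ((1 - r) * mu2 S2m)). lra. }
    lra.
  - intros HDgt.
    assert (Hlam22 : lam22 < S2in).
    { apply (lambda22_lt mu2 S2m Hmu2 D r lam21 lam22 Hlam2); [lra |].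
      apply Rlt_div_r; [exact Hr' | lra]. }
    lra.
Qed.
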